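(* Let $K$ be an arbitrary field and $A$ a finite-dimensional $K$-algebra of finite global dimension. Let $(P_i)_{i\in I}$ and $(S_i)_{i\in I}$ be representatives of the isomorphism classes of indecomposable projective and simple $A$-modules respectively, indexed so that $S_i$ is a quotient of $P_i$, and let $d_i = \dim_K \operatorname{End}_A(S_i)$. Let $Z_A=(Z_{ij})$ with $Z_{ij} = \dim_K \operatorname{Hom}_A(P_i,P_j)$. Then $Z_A$ is invertible over $\mathbb{Q}$, and writing $Z_A^{-1} = (\overline{Z}_{ij})$, \[ \overline{Z}_{ij} = d_i^{-1}\, \chi_A(S_j,S_i)\, d_j^{-1} \quad (i,j\in I). \] Consequently the magnitude of $\mathrm{IP}(A)$ is defined and \[ |\mathrm{IP}(A)| = \sum_{i,j\in I} d_i^{-1} d_j^{-1}\, \chi_A(S_j,S_i) . \]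
   Context: Modules are finitely generated left $A$-modules. The Euler form is $\chi_A(X,Y) = \sum_{n\ge 0} (-1)^n \dim_K \operatorname{Ext}^n_A(X,Y)$ for finite-dimensional modules $X,Y$ (a finite sum by finite global dimension). $\mathrm{IP}(A)$ is the $K$-linear category of indecomposable projective $A$-modules and all homomorphisms, equivalent to its full subcategory on the $P_i$. The magnitude $|\mathrm{IP}(A)|$ is defined (when $Z_A$ is invertible) as the sum of all entries of $Z_A^{-1}$. *)

From HB Require Import structures.
From mathcomp Require Import all_boot all_order all_algebra.
From mathcomp Require Import falgebra.
Set Implicit Arguments. Unset Strict Implicit. Unset Printing Implicit Defensive.
Import GRing.Theory.
Local Open Scope ring_scope.

Section FDModules.
Variables (K : fieldType) (A : falgType K).

(* A finite-dimensional left A-module: K^mdim (row vectors), with a . v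
   given by  v *m mact a ; hence mact (a * b) = mact b *m mact a. *)
Record fdmod := FDMod {
  mdim : nat;
  mact : A -> 'M[K]_mdim;
  mact_lin : forall (k : K) (a b : A), mact (k *: a + b) = k *: mact a + mact b;
  mact1 : mact 1 = 1%:M;
  mactM : forall a b : A, mact (a * b) = mact b *m mact a }.

Definition is_hom (X Y : fdmod) (f : 'M[K]_(mdim X, mdim Y)) : Prop :=
  forall a : A, mact X a *m f = f *m mact Y a.

(* Hom_A(X,Y) as a K-subspace of 'M_(mdim X, mdim Y) (vectorized by mxvec):
   commuting with the action of every element of a K-basis of A. *)
Definition homspace (X Y : fdmod) : 'M[K]_(mdim X * mdim Y) :=
  (\bigcap_(i < \dim (fullv : {vspace A}))
     kermx (lin_mx (fun f : 'M[K]_(mdim X, mdim Y) =>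
        mact X (tnth (vbasis fullv) i) *m f - f *m mact Y (tnth (vbasis fullv) i))))%MS.

Definition dimHom (X Y : fdmod) : nat := \rank (homspace X Y).

Definition isomorphic (X Y : fdmod) : Prop :=
  exists (f : 'M[K]_(mdim X, mdim Y)) (g : 'M[K]_(mdim Y, mdim X)),
    [/\ is_hom f, is_hom g, f *m g = 1%:M & g *m f = 1%:M].

Definition is_submod (X : fdmod) (U : 'M[K]_(mdim X)) : Prop :=
  forall a : A, (U *m mact X a <= U)%MS.

Definition simple_mod (X : fdmod) : Prop :=
  (0 < mdim X)%N /\
  forall U : 'M[K]_(mdim X), is_submod U -> U = 0 \/ row_full U.

Definition indecomposable (X : fdmod) : Prop :=
  (0 < mdim X)%N /\
  forall U V : 'M[K]_(mdim X), is_submod U -> is_submod V ->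
    row_full (U + V)%MS -> (U :&: V)%MS = 0 -> U = 0 \/ V = 0.

Definition is_epi (X Y : fdmod) (f : 'M[K]_(mdim X, mdim Y)) : Prop :=
  is_hom f /\ \rank f = mdim Y.

Definition projective (P : fdmod) : Prop :=
  forall (X Y : fdmod) (g : 'M[K]_(mdim X, mdim Y)) (f : 'M[K]_(mdim P, mdim Y)),
    is_epi g -> is_hom f -> exists h : 'M[K]_(mdim P, mdim X), is_hom h /\ h *m g = f.

(* A finite projective resolution
     0 <- X <-reps- P_0 <-rd 0- P_1 <-rd 1- P_2 <- ...,  with P_n = 0 for n > rlen *)
Record projres (X : fdmod) := ProjRes {
  rlen : nat;
  rmod : nat -> fdmod;
  rd : forall n, 'M[K]_(mdim (rmod n.+1), mdim (rmod n));
  reps : 'M[K]_(mdim (rmod 0), mdim X);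
  rproj : forall n, projective (rmod n);
  rd_hom : forall n, is_hom (rd n);
  reps_epi : is_epi reps;
  rexact0 : (kermx reps == rd 0)%MS;
  rexact : forall n, (kermx (rd n) == rd n.+1)%MS;
  rbound : forall n, (rlen < n)%N -> mdim (rmod n) = 0%N }.

(* Ext^n_A(X,Y) is the n-th cohomology of Hom_A(P_., Y) with differentials
   delta_n : Hom(P_n,Y) -> Hom(P_{n+1},Y), f |-> rd n *m f. *)
Definition ext_ker_rank (X Y : fdmod) (R : projres X) (n : nat) : nat :=
  \rank (homspace (rmod R n) Y
           :&: kermx (lin_mx (mulmx (rd R n) : 'M[K]_(mdim (rmod R n), mdim Y) -> _)))%MS.

Definition ext_im_rank (X Y : fdmod) (R : projres X) (n : nat) : nat :=
  \rank (homspace (rmod R n) Y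
           *m lin_mx (mulmx (rd R n) : 'M[K]_(mdim (rmod R n), mdim Y) -> _)).

Definition dimExt (X Y : fdmod) (R : projres X) (n : nat) : nat :=
  (ext_ker_rank Y R n - (if n is n'.+1 then ext_im_rank Y R n' else 0))%N.

(* Euler form chi_A(X,Y) = sum_n (-1)^n dim Ext^n(X,Y); Ext^n = 0 for n > rlen *)
Definition euler (X Y : fdmod) (R : projres X) : rat :=
  \sum_(n < (rlen R).+1) (-1) ^+ n * (dimExt Y R n)%:R.

Definition fin_gldim : Prop :=
  exists N : nat, forall X : fdmod, exists R : projres X, (rlen R <= N)%N.

End FDModules.

Definition magnitude (n : nat) (Z : 'M[rat]_n) : rat :=
  \sum_(i < n) \sum_(j < n) invmx Z i j.

From HB Require Import structures.
From mathcomp Require Import all_boot all_order all_algebra.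
From mathcomp Require Import falgebra.
From Stdlib Require Import Classical.
From mathcomp Require Import zify ring.
Set Implicit Arguments. Unset Strict Implicit. Unset Printing Implicit Defensive.
Import GRing.Theory Num.Theory.
Local Open Scope ring_scope.

(* A nonzero map from the projective cover P_i of S_i to
   a simple module S has the same kernel as P_i -> S_i: otherwise projectivity
   yields an endomorphism of P_i that is neither nilpotent nor invertible, against
   Fitting's lemma.  Hence dim Hom(P_i, S_j) = d_j if i = j and 0 otherwise, and a
   projective Q, being a direct sum of copies of the P_l, satisfies
     dim Hom(Y, Q) = sum_l dim Hom(Q, S_l) / d_l * dim Hom(Y, P_l).
   Since Hom(P_k, -) is exact, applying it to a projective resolution R of S_j gives
   dim Hom(P_k, S_j) = sum_n (-1)^n dim Hom(P_k, R_n); expanding every R_n as above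
   and computing the Euler form by rank-nullity degreewise, this reads
     sum_i Z_ki chi(S_j, S_i) / d_i = [k = j] d_j,
   so Z times the claimed inverse is the identity. *)

Lemma submxMr_rV (F : fieldType) a b p1 p2 (H1 : 'M[F]_(p1, a)) (H2 : 'M[F]_(p2, b))
    (T : 'M_(a, b)) :
  (forall v : 'rV_a, (v <= H1)%MS -> (v *m T <= H2)%MS) -> (H1 *m T <= H2)%MS.
Proof. by move=> TH12; apply/row_subP => i; rewrite row_mul TH12 ?row_sub. Qed.

Lemma mxrank_leq_retract (F : fieldType) a b p1 p2 (H1 : 'M[F]_(p1, a)) (H2 : 'M[F]_(p2, b))
    (T : 'M_(a, b)) (T' : 'M_(b, a)) :
  (forall v : 'rV_a, (v <= H1)%MS -> (v *m T <= H2)%MS) ->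
  (forall v : 'rV_a, (v <= H1)%MS -> v *m T *m T' = v) ->
  (\rank H1 <= \rank H2)%N.
Proof.
move=> TH12 TT'; have <- : \rank (H1 *m T) = \rank H1.
  apply/mxrank_injP/rowV0P => v; rewrite sub_capmx => /andP[vH1 /sub_kermxP vT0].
  by rewrite -(TT' v vH1) vT0 mul0mx.
by apply/mxrankS/submxMr_rV.
Qed.

Lemma mxrank_eq_inverse (F : fieldType) a b p1 p2 (H1 : 'M[F]_(p1, a)) (H2 : 'M[F]_(p2, b))
    (T : 'M_(a, b)) (T' : 'M_(b, a)) :
  (forall v : 'rV_a, (v <= H1)%MS -> (v *m T <= H2)%MS) ->
  (forall w : 'rV_b, (w <= H2)%MS -> (w *m T' <= H1)%MS) ->
  (forall v : 'rV_a, (v <= H1)%MS -> v *m T *m T' = v) ->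
  (forall w : 'rV_b, (w <= H2)%MS -> w *m T' *m T = w) ->
  \rank H1 = \rank H2.
Proof.
move=> TH12 T'H21 TT' T'T; apply/eqP; rewrite eqn_leq.
by rewrite (mxrank_leq_retract TH12 TT') (mxrank_leq_retract T'H21 T'T).
Qed.

Lemma submx_diag_block (F : fieldType) m1 m2 a b (H1 : 'M[F]_(m1, a)) (H2 : 'M[F]_(m2, b))
    (v : 'rV_(a + b)) :
  (v <= block_mx H1 0 0 H2)%MS = (lsubmx v <= H1)%MS && (rsubmx v <= H2)%MS.
Proof.
rewrite -[v]hsubmxK row_mxKl row_mxKr.
apply/idP/andP => [/submxP[x] | [/submxP[x1 ->] /submxP[x2 ->]]].
  rewrite -[x]hsubmxK mul_row_block !mulmx0 addr0 add0r => /eq_row_mx[-> ->].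
  by rewrite !submxMl.
by apply/submxP; exists (row_mx x1 x2); rewrite mul_row_block !mulmx0 addr0 add0r.
Qed.

Lemma genmx_eq0 (F : fieldType) m n (B : 'M[F]_(m, n)) : (<<B>>%MS == 0 :> 'M_n) = (B == 0).
Proof. by rewrite -!mxrank_eq0 mxrank_gen. Qed.

Section LinearComposition.
Variable F : fieldType.

Lemma mulmxr_lin_comp m n p q (f : 'M[F]_(n, p)) (g : 'M[F]_(p, q)) (v : 'rV_(m * n)) :
  v *m lin_mx (mulmxr f) *m lin_mx (mulmxr g) = v *m lin_mx (mulmxr (f *m g)).
Proof. by rewrite !mul_rV_lin /= mxvecK mulmxA. Qed.

Lemma mulmx_lin_comp m n p q (f : 'M[F]_(m, n)) (g : 'M[F]_(q, m)) (v : 'rV_(n * p)) :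
  v *m lin_mx (mulmx f) *m lin_mx (mulmx g) = v *m lin_mx (mulmx (g *m f)).
Proof. by rewrite !mul_rV_lin /= mxvecK mulmxA. Qed.

Lemma mulmxr_lin1 m n (v : 'rV[F]_(m * n)) : v *m lin_mx (mulmxr 1%:M) = v.
Proof. by rewrite mul_rV_lin /= mulmx1 vec_mxK. Qed.

Lemma mulmx_lin1 m n (v : 'rV[F]_(m * n)) : v *m lin_mx (mulmx 1%:M) = v.
Proof. by rewrite mul_rV_lin /= mul1mx vec_mxK. Qed.

Lemma mulmxr_lin0 m n p (v : 'rV[F]_(m * n)) : v *m lin_mx (mulmxr (0 : 'M_(n, p))) = 0.
Proof. by rewrite mul_rV_lin /= mulmx0 linear0. Qed.

Lemma mulmx_lin0 m n p (v : 'rV[F]_(n * p)) : v *m lin_mx (mulmx (0 : 'M_(m, n))) = 0.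
Proof. by rewrite mul_rV_lin /= mul0mx linear0. Qed.

End LinearComposition.

Section MatrixPowers.
Variables (F : fieldType) (m : nat) (e : 'M[F]_m).

Definition mxpow j : 'M[F]_m := iter j (mulmx e) 1%:M.

Lemma mxpowS j : mxpow j.+1 = e *m mxpow j.
Proof. by []. Qed.

Lemma mxpowSr j : mxpow j.+1 = mxpow j *m e.
Proof.
elim: j => [|j IHj]; first by rewrite /mxpow /= mulmx1 mul1mx.
by rewrite mxpowS [in LHS]IHj mulmxA.
Qed.

Lemma mxpowD i j : mxpow (i + j) = mxpow i *m mxpow j.
Proof. by elim: i => [|i IHi]; rewrite ?mul1mx // addSn !mxpowS IHi mulmxA. Qed.

Lemma mxrank_mxpowS j : (\rank (mxpow j.+1) <= \rank (mxpow j))%N.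
Proof. by rewrite mxpowS mxrankM_maxr. Qed.

Lemma mxrank_mxpow_stable j k :
  \rank (mxpow j) = \rank (mxpow j.+1) -> \rank (mxpow (j + k)) = \rank (mxpow j).
Proof.
move=> rk_j; suff rk_step i : \rank (mxpow (j + i)) = \rank (mxpow (j + i).+1).
  by elim: k => [|k IHk]; rewrite ?addn0 // addnS -rk_step.
elim: i => [|i IHi]; first by rewrite addn0.
have /eqmxP pow_eq : (mxpow (j + i).+1 == mxpow (j + i))%MS.
  by rewrite -(mxrank_leqif_eq _) ?IHi // mxpowS submxMl.
by rewrite addnS !mxpowSr -mxpowSr (eqmxMr _ pow_eq) -mxpowSr.
Qed.

Lemma mxrank_mxpow_strict i :
  (forall j, (j <= i)%N -> \rank (mxpow j.+1) < \rank (mxpow j))%N ->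
  (\rank (mxpow i.+1) + i.+1 <= m)%N.
Proof.
elim: i => [|i IHi] drop.
  by rewrite addn1; have := drop 0%N isT; rewrite /= mxrank1.
have := drop i.+1 (leqnn _); have := IHi (fun j ji => drop j (leqW ji)); lia.
Qed.

(* The ranks of e^0, ..., e^m cannot all drop strictly: that would cost more than m. *)
Lemma mxrank_mxpow_fitting : \rank (mxpow (m + m)) = \rank (mxpow m).
Proof.
case: (boolP [exists j : 'I_m.+1, \rank (mxpow j) == \rank (mxpow j.+1)]).
  case/existsP=> j /eqP rk_j; have jm : (j <= m)%N by rewrite -ltnS.
  have := mxrank_mxpow_stable (m + m - j) rk_j; have := mxrank_mxpow_stable (m - j) rk_j.
  by rewrite !subnKC ?(leq_trans jm (leq_addr _ _)) // => -> ->.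
rewrite negb_exists => /forallP no_stop.
have drop j : (j <= m)%N -> (\rank (mxpow j.+1) < \rank (mxpow j))%N.
  rewrite -ltnS => jm; have := no_stop (Ordinal jm); rewrite ltn_neqAle mxrank_mxpowS.
  by rewrite eq_sym andbT.
by have := mxrank_mxpow_strict drop; lia.
Qed.

End MatrixPowers.

Section Homs.
Variables (K : fieldType) (A : falgType K).
Implicit Types P Q X Y : fdmod A.

Lemma mact_is_linear X : linear (@mact _ _ X).
Proof. by move=> k a b; rewrite mact_lin. Qed.
HB.instance Definition _ X :=
  GRing.isLinear.Build K A 'M[K]_(mdim X) _ (@mact _ _ X) (@mact_is_linear X).

Definition hom_defect X Y (a : A) (f : 'M[K]_(mdim X, mdim Y)) :=
  mact X a *m f - f *m mact Y a.

Lemma hom_defect_is_linear X Y a : linear (@hom_defect X Y a).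
Proof.
move=> k f g; rewrite /hom_defect mulmxDr mulmxDl -!scalemxAr -!scalemxAl.
by rewrite scalerBr addrACA opprD.
Qed.
HB.instance Definition _ X Y a :=
  GRing.isLinear.Build K _ _ _ (@hom_defect X Y a) (@hom_defect_is_linear X Y a).

Lemma homspaceP X Y (f : 'M[K]_(mdim X, mdim Y)) :
  (mxvec f <= homspace X Y)%MS <-> is_hom f.
Proof.
pose e i := tnth (vbasis (fullv : {vspace A})) i.
have homspaceE : homspace X Y =
    (\bigcap_(i < \dim (fullv : {vspace A})) kermx (lin_mx (@hom_defect X Y (e i))))%MS.
  by [].
rewrite homspaceE; split => [/sub_bigcapmxP f_ker a | f_hom].
  have f_e i : hom_defect (e i) f = 0.
    by move: (f_ker i isT); rewrite sub_kermx mul_vec_lin => /eqP/(canRL mxvecK); rewrite linear0.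
  rewrite (coord_vbasis (memvf a)) !linear_sum /= mulmx_suml.
  apply: eq_bigr => i _; rewrite !linearZ /= -scalemxAl; congr (_ *: _).
  by apply/eqP; rewrite -subr_eq0 -(tnth_nth 0) [_ - _]f_e.
apply/sub_bigcapmxP => i _.
by rewrite sub_kermx mul_vec_lin /= /hom_defect f_hom subrr linear0.
Qed.

Lemma homspace_vecP X Y (v : 'rV[K]_(mdim X * mdim Y)) :
  (v <= homspace X Y)%MS <-> is_hom (vec_mx v).
Proof. by rewrite -homspaceP vec_mxK. Qed.

Lemma is_hom1 X : @is_hom _ _ X X 1%:M.
Proof. by move=> a; rewrite mulmx1 mul1mx. Qed.

Lemma is_homM X Y Q (f : 'M[K]_(mdim X, mdim Y)) (g : 'M[K]_(mdim Y, mdim Q)) :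
  is_hom f -> is_hom g -> is_hom (f *m g).
Proof. by move=> hf hg a; rewrite mulmxA hf -mulmxA hg mulmxA. Qed.

Lemma homspace_mulmxr X Y Y' (f : 'M[K]_(mdim Y, mdim Y')) (v : 'rV_(mdim X * mdim Y)) :
  is_hom f -> (v <= homspace X Y)%MS -> (v *m lin_mx (mulmxr f) <= homspace X Y')%MS.
Proof. by rewrite mul_rV_lin /= homspaceP homspace_vecP => hf hv; apply: is_homM. Qed.

Lemma homspace_mulmx X X' Y (f : 'M[K]_(mdim X', mdim X)) (v : 'rV_(mdim X * mdim Y)) :
  is_hom f -> (v <= homspace X Y)%MS -> (v *m lin_mx (mulmx f) <= homspace X' Y)%MS.
Proof. by rewrite mul_rV_lin /= homspaceP homspace_vecP; apply: is_homM. Qed.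

Lemma dimHom_iso_r X X' Y : isomorphic X X' -> dimHom Y X = dimHom Y X'.
Proof.
case=> f [g [hf hg fg gf]].
apply: (mxrank_eq_inverse (T := lin_mx (mulmxr f)) (T' := lin_mx (mulmxr g))).
- by move=> v; apply: homspace_mulmxr.
- by move=> w; apply: homspace_mulmxr.
- by move=> v _; rewrite mulmxr_lin_comp fg mulmxr_lin1.
- by move=> w _; rewrite mulmxr_lin_comp gf mulmxr_lin1.
Qed.

Lemma dimHom_iso_l X X' Y : isomorphic X X' -> dimHom X Y = dimHom X' Y.
Proof.
case=> f [g [hf hg fg gf]].
apply: (mxrank_eq_inverse (T := lin_mx (mulmx g)) (T' := lin_mx (mulmx f))).
- by move=> v; apply: homspace_mulmx.
- by move=> w; apply: homspace_mulmx.
- by move=> v _; rewrite mulmx_lin_comp fg mulmx_lin1.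
- by move=> w _; rewrite mulmx_lin_comp gf mulmx_lin1.
Qed.

Section Biproduct.
Variables (Q X1 X2 : fdmod A).
Variables (i1 : 'M[K]_(mdim X1, mdim Q)) (p1 : 'M[K]_(mdim Q, mdim X1)).
Variables (i2 : 'M[K]_(mdim X2, mdim Q)) (p2 : 'M[K]_(mdim Q, mdim X2)).
Hypotheses (hi1 : is_hom i1) (hp1 : is_hom p1) (hi2 : is_hom i2) (hp2 : is_hom p2).
Hypotheses (i1p1 : i1 *m p1 = 1%:M) (i2p2 : i2 *m p2 = 1%:M).
Hypotheses (i1p2 : i1 *m p2 = 0) (i2p1 : i2 *m p1 = 0).
Hypothesis (p1i1_p2i2 : p1 *m i1 + p2 *m i2 = 1%:M).

Lemma dimHom_biprod_r Y : dimHom Y Q = (dimHom Y X1 + dimHom Y X2)%N.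
Proof.
rewrite -rank_diag_block_mx.
apply: (mxrank_eq_inverse (T := row_mx (lin_mx (mulmxr p1)) (lin_mx (mulmxr p2)))
                          (T' := col_mx (lin_mx (mulmxr i1)) (lin_mx (mulmxr i2)))).
- move=> v vQ; rewrite submx_diag_block mul_mx_row row_mxKl row_mxKr.
  by rewrite !homspace_mulmxr.
- move=> w; rewrite submx_diag_block -[w]hsubmxK mul_row_col row_mxKl row_mxKr.
  by case/andP=> w1 w2; rewrite addmx_sub ?homspace_mulmxr.
- move=> v _; rewrite mul_mx_row mul_row_col !mulmxr_lin_comp.
  by rewrite -[in RHS](mulmxr_lin1 v) -p1i1_p2i2 !mul_rV_lin /= mulmxDr linearD.
- move=> w _; rewrite -[w]hsubmxK mul_row_col mulmxDl !mul_mx_row !mulmxr_lin_comp.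
  rewrite i1p1 i1p2 i2p1 i2p2 !mulmxr_lin1 !mulmxr_lin0.
  by rewrite add_row_mx addr0 add0r.
Qed.

Lemma dimHom_biprod_l Y : dimHom Q Y = (dimHom X1 Y + dimHom X2 Y)%N.
Proof.
rewrite -rank_diag_block_mx.
apply: (mxrank_eq_inverse (T := row_mx (lin_mx (mulmx i1)) (lin_mx (mulmx i2)))
                          (T' := col_mx (lin_mx (mulmx p1)) (lin_mx (mulmx p2)))).
- move=> v vQ; rewrite submx_diag_block mul_mx_row row_mxKl row_mxKr.
  by rewrite !homspace_mulmx.
- move=> w; rewrite submx_diag_block -[w]hsubmxK mul_row_col row_mxKl row_mxKr.
  by case/andP=> w1 w2; rewrite addmx_sub ?homspace_mulmx.
- move=> v _; rewrite mul_mx_row mul_row_col !mulmx_lin_comp.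
  by rewrite -[in RHS](mulmx_lin1 v) -p1i1_p2i2 !mul_rV_lin /= mulmxDl linearD.
- move=> w _; rewrite -[w]hsubmxK mul_row_col mulmxDl !mul_mx_row !mulmx_lin_comp.
  rewrite i1p1 i1p2 i2p1 i2p2 !mulmx_lin1 !mulmx_lin0.
  by rewrite add_row_mx addr0 add0r.
Qed.

End Biproduct.

Lemma dimHom_eq0_r X Y : mdim X = 0%N -> dimHom Y X = 0%N.
Proof.
move=> X0; apply/eqP; rewrite -leqn0 (leq_trans (rank_leq_col _)) //.
by rewrite X0 muln0.
Qed.

Lemma dimHom_eq0_l X Y : mdim X = 0%N -> dimHom X Y = 0%N.
Proof.
move=> X0; apply/eqP; rewrite -leqn0 (leq_trans (rank_leq_col _)) //.
by rewrite X0 mul0n.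
Qed.

Lemma dimHom_gt0 X : (0 < mdim X)%N -> (0 < dimHom X X)%N.
Proof.
move=> X_gt0; have id_hom : (mxvec (1%:M : 'M_(mdim X)) <= homspace X X)%MS.
  by apply/homspaceP; apply: is_hom1.
rewrite (leq_trans _ (mxrankS id_hom)) // rank_rV lt0b mxvec_eq0.
apply/eqP => /matrixP/(_ (Ordinal X_gt0) (Ordinal X_gt0)).
by rewrite !mxE eqxx => /eqP; rewrite oner_eq0.
Qed.

Definition submod_act X (U : 'M[K]_(mdim X)) (a : A) : 'M[K]_(\rank U) :=
  row_base U *m mact X a *m pinvmx (row_base U).

Lemma submod_act_lin X (U : 'M[K]_(mdim X)) k a b :
  submod_act U (k *: a + b) = k *: submod_act U a + submod_act U b.
Proof. by rewrite /submod_act mact_lin mulmxDr -scalemxAr !mulmxDl -!scalemxAl. Qed.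

Lemma submod_act1 X (U : 'M[K]_(mdim X)) : submod_act U 1 = 1%:M.
Proof. by rewrite /submod_act mact1 mulmx1 mulmxVp ?row_base_free. Qed.

Lemma row_base_submod X (U : 'M[K]_(mdim X)) (hU : is_submod U) a :
  (row_base U *m mact X a <= row_base U)%MS.
Proof. by rewrite (eqmxMr _ (eq_row_base U)) eq_row_base. Qed.

Lemma submod_actM X (U : 'M[K]_(mdim X)) (hU : is_submod U) a b :
  submod_act U (a * b) = submod_act U b *m submod_act U a.
Proof.
have BbK : row_base U *m mact X b *m pinvmx (row_base U) *m row_base U =
    row_base U *m mact X b by rewrite mulmxKpV ?row_base_submod.
rewrite /submod_act mactM; move: BbK.
(* pinvmx is itself a product, which mulmxA would expose: abstract it first. *)
move: (pinvmx (row_base U)) => pB; move: (row_base U) => B BbK.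
by rewrite !mulmxA BbK.
Qed.

Definition submod X (U : 'M[K]_(mdim X)) (hU : is_submod U) : fdmod A :=
  FDMod (@submod_act_lin X U) (submod_act1 U) (submod_actM hU).

Lemma is_hom_row_base X (U : 'M[K]_(mdim X)) (hU : is_submod U) :
  @is_hom _ _ (submod hU) X (row_base U).
Proof.
move=> a; rewrite /= /submod_act; move: (mulmxKpV (row_base_submod hU a)).
by move: (pinvmx (row_base U)) => pB; move: (row_base U) => B ->.
Qed.

Lemma is_hom_corestrict X Y (U : 'M[K]_(mdim Y)) (hU : is_submod U)
    (f : 'M[K]_(mdim X, mdim Y)) :
  is_hom f -> (f <= U)%MS -> @is_hom _ _ X (submod hU) (f *m pinvmx (row_base U)).
Proof.
move=> hf fU a; rewrite /= /submod_act.
have fK : f *m pinvmx (row_base U) *m row_base U = f by rewrite mulmxKpV ?eq_row_base.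
move: fK; move: (pinvmx (row_base U)) => pB; move: (row_base U) => B fK.
by rewrite !mulmxA fK hf.
Qed.

Lemma is_submod_img X Y (f : 'M[K]_(mdim X, mdim Y)) (U : 'M[K]_(mdim X)) :
  is_hom f -> is_submod U -> is_submod (<<U *m f>>%MS : 'M[K]_(mdim Y)).
Proof.
move=> hf hU a; rewrite (eqmxMr _ (genmxE _)) genmxE -mulmxA -hf mulmxA.
exact: submxMr (hU a).
Qed.

Lemma is_submod_hom_img X Y (f : 'M[K]_(mdim X, mdim Y)) :
  is_hom f -> is_submod (<<f>>%MS : 'M[K]_(mdim Y)).
Proof. by move=> hf; rewrite -[f]mul1mx; apply: is_submod_img => // a; rewrite submx1. Qed.

Lemma epi_row_full X Y (f : 'M[K]_(mdim X, mdim Y)) : is_epi f -> row_full f.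
Proof. by case=> _ rk_f; rewrite /row_full rk_f. Qed.

(* Projectivity applies to g corestricted to its image, which is an epimorphism. *)
Lemma projective_lift P X Y (g : 'M[K]_(mdim X, mdim Y)) (f : 'M[K]_(mdim P, mdim Y)) :
  projective P -> is_hom g -> is_hom f -> (f <= g)%MS ->
  exists h : 'M[K]_(mdim P, mdim X), is_hom h /\ h *m g = f.
Proof.
move=> hP hg hf fg.
have hU := is_submod_hom_img hg.
pose pB := pinvmx (row_base <<g>>%MS).
have gU : (g <= <<g>>)%MS by rewrite genmxE.
have fU : (f <= <<g>>)%MS by rewrite genmxE.
have gK : g *m pB *m row_base <<g>>%MS = g by rewrite mulmxKpV ?eq_row_base.
have fK : f *m pB *m row_base <<g>>%MS = f by rewrite mulmxKpV ?eq_row_base.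
have g_epi : is_epi (g *m pB : 'M_(mdim X, mdim (submod hU))).
  split; first exact: is_hom_corestrict.
  apply/eqP; rewrite eqn_leq rank_leq_col /=.
  by apply: leq_trans (mxrankM_maxl _ (row_base <<g>>%MS)); rewrite gK mxrank_gen.
have [h [hh hgf]] := hP _ _ _ _ g_epi (is_hom_corestrict hU hf fU).
by exists h; split; rewrite // -fK -hgf -mulmxA gK.
Qed.

Lemma projective_retract Q X (i : 'M[K]_(mdim X, mdim Q)) (p : 'M[K]_(mdim Q, mdim X)) :
  is_hom i -> is_hom p -> i *m p = 1%:M -> projective Q -> projective X.
Proof.
move=> hi hp ip hQ Y Y' g f g_epi hf.
have [h [hh hg]] := hQ Y Y' g (p *m f) g_epi (is_homM hp hf).
exists (i *m h); split; first exact: is_homM.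
by rewrite -mulmxA hg mulmxA ip mul1mx.
Qed.

Section DirectSum.
Variables (Q : fdmod A) (U V : 'M[K]_(mdim Q)).
Hypotheses (hU : is_submod U) (hV : is_submod V).
Hypotheses (UV0 : (U :&: V = 0)%MS) (UV_full : row_full (U + V)%MS).

Lemma proj_mx_sum : proj_mx U V + proj_mx V U = 1%:M.
Proof. by rewrite -[proj_mx U V]mul1mx -[proj_mx V U]mul1mx add_proj_mx ?sub1mx. Qed.

Lemma proj_mx_subU : (proj_mx U V <= U)%MS.
Proof. by rewrite -[proj_mx U V]mul1mx proj_mx_sub. Qed.

Lemma is_hom_proj_mx : @is_hom _ _ Q Q (proj_mx U V).
Proof.
have proj_mx_subV : (proj_mx V U <= V)%MS by rewrite -[proj_mx V U]mul1mx proj_mx_sub.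
move=> a; rewrite -[mact Q a in LHS]mul1mx -proj_mx_sum !mulmxDl.
rewrite proj_mx_id ?proj_mx_0 ?addr0 //.
  exact: submx_trans (submxMr _ proj_mx_subV) (hV a).
exact: submx_trans (submxMr _ proj_mx_subU) (hU a).
Qed.

Definition proj_submod : 'M[K]_(mdim Q, mdim (submod hU)) :=
  proj_mx U V *m pinvmx (row_base U).

Lemma is_hom_proj_submod : is_hom proj_submod.
Proof. exact: is_hom_corestrict is_hom_proj_mx proj_mx_subU. Qed.

Lemma row_base_proj_submod : row_base U *m proj_submod = 1%:M.
Proof. by rewrite mulmxA proj_mx_id ?eq_row_base // mulmxVp ?row_base_free. Qed.

Lemma row_base_proj_submod0 : row_base V *m proj_submod = 0.
Proof. by rewrite mulmxA proj_mx_0 ?eq_row_base // mul0mx. Qed.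

Lemma proj_submod_row_base : proj_submod *m row_base U = proj_mx U V.
Proof. by rewrite mulmxKpV ?eq_row_base ?proj_mx_subU. Qed.

End DirectSum.

Section DirectSumComplement.
Variables (Q : fdmod A) (U V : 'M[K]_(mdim Q)).
Hypotheses (hU : is_submod U) (hV : is_submod V).
Hypotheses (UV0 : (U :&: V = 0)%MS) (UV_full : row_full (U + V)%MS).

Let VU0 : (V :&: U = 0)%MS. Proof. by rewrite capmxC. Qed.
Let VU_full : row_full (V + U)%MS. Proof. by rewrite addsmxC. Qed.

Lemma dimHom_direct_sum_r Y :
  dimHom Y Q = (dimHom Y (submod hU) + dimHom Y (submod hV))%N.
Proof.
apply: (dimHom_biprod_r (is_hom_row_base hU) (is_hom_proj_submod hU hV UV0 UV_full)
                        (is_hom_row_base hV) (is_hom_proj_submod hV hU VU0 VU_full)).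
- exact: row_base_proj_submod.
- exact: row_base_proj_submod.
- exact: row_base_proj_submod0.
- exact: row_base_proj_submod0.
- by rewrite !proj_submod_row_base proj_mx_sum.
Qed.

Lemma dimHom_direct_sum_l Y :
  dimHom Q Y = (dimHom (submod hU) Y + dimHom (submod hV) Y)%N.
Proof.
apply: (dimHom_biprod_l (is_hom_row_base hU) (is_hom_proj_submod hU hV UV0 UV_full)
                        (is_hom_row_base hV) (is_hom_proj_submod hV hU VU0 VU_full)).
- exact: row_base_proj_submod.
- exact: row_base_proj_submod.
- exact: row_base_proj_submod0.
- exact: row_base_proj_submod0.
- by rewrite !proj_submod_row_base proj_mx_sum.
Qed.

Lemma projective_direct_summands :
  projective Q -> projective (submod hU) /\ projective (submod hV).
Proof.
move=> hQ; split.
  apply: (projective_retract (is_hom_row_base hU) (is_hom_proj_submod hU hV UV0 UV_full)) => //.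
  exact: row_base_proj_submod.
apply: (projective_retract (is_hom_row_base hV) (is_hom_proj_submod hV hU VU0 VU_full)) => //.
exact: row_base_proj_submod.
Qed.

End DirectSumComplement.

Lemma decomposable_split Q : (0 < mdim Q)%N -> ~ indecomposable Q ->
  exists (U V : 'M[K]_(mdim Q)) (hU : is_submod U) (hV : is_submod V),
    [/\ (U :&: V = 0)%MS, row_full (U + V)%MS, U != 0 & V != 0].
Proof.
move=> Q_gt0 Q_dec; apply: NNPP => no_split; apply: Q_dec; split => // U V hU hV UV_full UV0.
apply: NNPP => /not_or_and[/eqP nU /eqP nV]; apply: no_split.
by exists U, V, hU, hV.
Qed.

Lemma is_hom_mxpow X (e : 'M[K]_(mdim X)) j : is_hom e -> is_hom (mxpow e j).
Proof. by move=> he; elim: j => [|j IHj]; [apply: is_hom1 | rewrite mxpowS; apply: is_homM]. Qed.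

Lemma is_submod_ker X Y (f : 'M[K]_(mdim X, mdim Y)) : is_hom f -> is_submod (kermx f).
Proof. by move=> hf a; apply/sub_kermxP; rewrite -mulmxA hf mulmxA mulmx_ker mul0mx. Qed.

Lemma indecomposable_fitting P (e : 'M[K]_(mdim P)) :
  indecomposable P -> is_hom e -> mxpow e (mdim P) = 0 \/ e \in unitmx.
Proof.
case=> P_gt0 P_indec he; set m := mdim P in P_gt0 e he *; set E := mxpow e m.
have hE : is_hom E by apply: is_hom_mxpow.
have hImE : is_submod E by move=> a; rewrite -hE submxMl.
have ImE_kerE0 : (kermx E :&: E = 0)%MS.
  by rewrite capmxC; apply/eqP/mxrank_injP; rewrite -mxpowD mxrank_mxpow_fitting.
have ImE_kerE_full : row_full (kermx E + E)%MS.
  by rewrite /row_full mxrank_disjoint_sum // mxrank_ker subnK ?rank_leq_row.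
case: (P_indec _ _ (is_submod_ker hE) hImE ImE_kerE_full ImE_kerE0) => [kerE0 | ]; last by left.
right; rewrite -row_free_unit /row_free eqn_leq rank_leq_row /=.
have rkE : \rank E = m by move: (mxrank_ker E); rewrite kerE0 mxrank0; have := rank_leq_row E; lia.
have E_eq : E = mxpow e m.-1 *m e by rewrite /E -mxpowSr prednK.
by rewrite -{1}rkE E_eq mxrankM_maxr.
Qed.

Lemma is_epi_simple X S (f : 'M[K]_(mdim X, mdim S)) :
  simple_mod S -> is_hom f -> f != 0 -> is_epi f.
Proof.
case=> _ S_simple hf f_neq0; split => //.
case: (S_simple _ (is_submod_hom_img hf)) => [/eqP | ].
  by rewrite genmx_eq0 (negbTE f_neq0).
by rewrite /row_full mxrank_gen => /eqP.
Qed.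

Lemma epi_factor X Y Y' (f : 'M[K]_(mdim X, mdim Y)) (g : 'M[K]_(mdim X, mdim Y')) :
  is_epi f -> is_hom g -> (kermx f <= kermx g)%MS ->
  f *m (pinvmx f *m g) = g /\ is_hom (pinvmx f *m g).
Proof.
move=> f_epi hg ker_fg.
have fgK : f *m (pinvmx f *m g) = g.
  have ker_g : (1%:M - f *m pinvmx f) *m g = 0.
    apply/sub_kermxP; apply: submx_trans ker_fg; apply/sub_kermxP.
    by rewrite mulmxBl mul1mx mulmxKpV ?subrr.
  by move/eqP: ker_g; rewrite mulmxBl mul1mx subr_eq0 mulmxA => /eqP <-.
split => //; move: fgK; move: (pinvmx f *m g) => h fhK a.
have [hf _] := f_epi; apply: (row_full_inj (epi_row_full f_epi)).
by rewrite mulmxA -hf -mulmxA fhK hg -fhK mulmxA.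
Qed.

Lemma isomorphic_epi_ker X Y Y' (f : 'M[K]_(mdim X, mdim Y)) (g : 'M[K]_(mdim X, mdim Y')) :
  is_epi f -> is_epi g -> (kermx f == kermx g)%MS -> isomorphic Y Y'.
Proof.
move=> f_epi g_epi /andP[ker_fg ker_gf].
have [fgK hfg] := epi_factor f_epi g_epi.1 ker_fg.
have [gfK hgf] := epi_factor g_epi f_epi.1 ker_gf.
exists (pinvmx f *m g), (pinvmx g *m f); split => //.
  by apply: (row_full_inj (epi_row_full f_epi)); rewrite mulmxA fgK gfK mulmx1.
by apply: (row_full_inj (epi_row_full g_epi)); rewrite mulmxA gfK fgK mulmx1.
Qed.

(* If f2 were nonzero on ker f1, it would map ker f1 onto S2; lifting f2 through
   ker f1 gives an endomorphism e of P with e f2 = f2 and image in ker f1, and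
   Fitting's lemma rules out both e nilpotent and e invertible. *)
Lemma projective_indecomposable_ker P S1 S2 (f1 : 'M[K]_(mdim P, mdim S1))
    (f2 : 'M[K]_(mdim P, mdim S2)) :
  projective P -> indecomposable P -> (0 < mdim S1)%N -> simple_mod S2 ->
  is_epi f1 -> is_epi f2 -> (kermx f1 <= kermx f2)%MS.
Proof.
move=> hP P_indec S1_gt0 [S2_gt0 S2_simple] f1_epi f2_epi.
have hker := is_submod_ker f1_epi.1.
case: (S2_simple _ (is_submod_img f2_epi.1 hker)) => [/eqP | ker_f1_f2_full].
  by rewrite genmx_eq0 => /eqP/sub_kermxP.
exfalso; pose B := row_base (kermx f1).
have f2_sub : (f2 <= B *m f2)%MS.
  by apply: submx_full; rewrite /row_full /B (eqmxMr _ (eq_row_base _)) -mxrank_gen.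
have [h [hh hf2]] := projective_lift hP (is_homM (is_hom_row_base hker) f2_epi.1) f2_epi.1 f2_sub.
pose e := h *m B; have he : is_hom e by apply: is_homM => //; apply: is_hom_row_base.
case: (indecomposable_fitting P_indec he) => [e_nil | e_unit].
  have ef2 j : mxpow e j *m f2 = f2.
    by elim: j => [|j IHj]; rewrite ?mul1mx // mxpowSr -mulmxA -mulmxA hf2 IHj.
  by move: f2_epi.2 S2_gt0; rewrite -(ef2 (mdim P)) e_nil mul0mx mxrank0 => <-.
have : (mdim P <= \rank (kermx f1))%N.
  move: e_unit; rewrite -row_full_unit /row_full => /eqP {1}<-.
  by apply: mxrankS; rewrite (submx_trans (submxMl h B)) ?eq_row_base.
rewrite mxrank_ker f1_epi.2; have := rank_leq_row f1; rewrite f1_epi.2; case: P_indec; lia.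
Qed.

Section ProjectiveCover.
Variables (P S : fdmod A) (pi : 'M[K]_(mdim P, mdim S)).
Hypotheses (hP : projective P) (P_indec : indecomposable P).
Hypotheses (S_simple : simple_mod S) (pi_epi : is_epi pi).

Lemma cover_hom_factor S' (f : 'M[K]_(mdim P, mdim S')) :
  simple_mod S' -> is_hom f -> pi *m (pinvmx pi *m f) = f /\ is_hom (pinvmx pi *m f).
Proof.
move=> S'_simple hf; have [-> | f_neq0] := eqVneq f 0.
  by rewrite !mulmx0; split => // a; rewrite mulmx0 mul0mx.
apply: (epi_factor pi_epi hf).
have f_epi := is_epi_simple S'_simple hf f_neq0.
by apply: (projective_indecomposable_ker hP P_indec _ S'_simple pi_epi f_epi); case: S_simple.
Qed.

Lemma dimHom_cover_simple : dimHom P S = dimHom S S.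
Proof.
have pi_full := epi_row_full pi_epi.
apply: (mxrank_eq_inverse (T := lin_mx (mulmx (pinvmx pi))) (T' := lin_mx (mulmx pi))).
- move=> v; rewrite mul_rV_lin /= homspaceP homspace_vecP.
  by case/(cover_hom_factor S_simple).
- by move=> w; apply: homspace_mulmx; case: pi_epi.
- move=> v; rewrite mulmx_lin_comp homspace_vecP => /(cover_hom_factor S_simple)[piK _].
  by rewrite mul_rV_lin /= -mulmxA piK vec_mxK.
- by move=> w _; rewrite mulmx_lin_comp mulVpmx // mulmx_lin1.
Qed.

Lemma dimHom_cover_simple_noniso S' :
  simple_mod S' -> ~ isomorphic S S' -> dimHom P S' = 0%N.
Proof.
move=> S'_simple S_S'; apply/eqP; rewrite mxrank_eq0; apply/rowV0P => v.
rewrite homspace_vecP => hv; rewrite -[v]vec_mxK; apply/eqP; rewrite mxvec_eq0.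
apply: contraT => v_neq0; case: S_S'.
apply: (isomorphic_epi_ker pi_epi (is_epi_simple S'_simple hv v_neq0)).
have [S_gt0 _] := S_simple; have [S'_gt0 _] := S'_simple.
by apply/andP; split; apply: projective_indecomposable_ker; rewrite //; apply: is_epi_simple.
Qed.

End ProjectiveCover.

Lemma homspace_exact P Y1 Y2 Y3 (g : 'M[K]_(mdim Y1, mdim Y2)) (d : 'M[K]_(mdim Y2, mdim Y3)) :
  projective P -> is_hom g -> is_hom d -> g *m d = 0 -> (kermx d <= g)%MS ->
  \rank (homspace P Y2 :&: kermx (lin_mx (mulmxr d))) =
  \rank (homspace P Y1 *m lin_mx (mulmxr g)).
Proof.
move=> hP hg hd gd0 ker_d; apply/eqP; rewrite eqn_leq; apply/andP; split; apply: mxrankS.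
  apply/rV_subP => v; rewrite sub_capmx => /andP[/homspace_vecP hv /sub_kermxP].
  rewrite mul_rV_lin /= => /eqP; rewrite mxvec_eq0 => /eqP vd0.
  have vg : (vec_mx v <= g)%MS by apply: submx_trans ker_d; apply/sub_kermxP.
  have [h [hh hg_v]] := projective_lift hP hg hv vg.
  have -> : v = mxvec h *m lin_mx (mulmxr g) by rewrite mul_rV_lin /= mxvecK hg_v vec_mxK.
  by rewrite submxMr // homspaceP.
apply: submxMr_rV => v hv; rewrite sub_capmx homspace_mulmxr //; apply/sub_kermxP.
by rewrite mulmxr_lin_comp gd0 mulmxr_lin0.
Qed.

Lemma homspace_epi P Y1 Y2 (g : 'M[K]_(mdim Y1, mdim Y2)) :
  projective P -> is_epi g -> \rank (homspace P Y1 *m lin_mx (mulmxr g)) = dimHom P Y2.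
Proof.
move=> hP [hg rk_g]; apply/eqP; rewrite eqn_leq; apply/andP; split; apply: mxrankS.
  by apply: submxMr_rV => v; apply: homspace_mulmxr.
apply/rV_subP => v; rewrite homspace_vecP => hv.
have vg : (vec_mx v <= g)%MS by rewrite submx_full // /row_full rk_g.
have [h [hh hg_v]] := projective_lift hP hg hv vg.
have -> : v = mxvec h *m lin_mx (mulmxr g) by rewrite mul_rV_lin /= mxvecK hg_v vec_mxK.
by rewrite submxMr // homspaceP.
Qed.

(* By exactness of Hom(P, -), dim Hom(P, R_n.+1) = I n + I n.+1, which telescopes. *)
Lemma dimHom_resolution P X (R : projres X) : projective P ->
  (dimHom P X)%:R = \sum_(n < (rlen R).+1) (-1) ^+ n * ((dimHom P (rmod R n))%:R : rat).
Proof.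
move=> hP; pose I n := \rank (homspace P (rmod R n.+1) *m lin_mx (mulmxr (rd R n))).
have dim0 : dimHom P (rmod R 0) = (dimHom P X + I 0%N)%N.
  rewrite /dimHom -(mxrank_mul_ker _ (lin_mx (mulmxr (reps R)))) (homspace_epi hP (reps_epi R)).
  have /andP[ker_eps eps_ker] := rexact0 R.
  by rewrite (homspace_exact hP (rd_hom R 0) (reps_epi R).1) //; apply/sub_kermxP.
have dimS n : dimHom P (rmod R n.+1) = (I n + I n.+1)%N.
  rewrite /dimHom -(mxrank_mul_ker _ (lin_mx (mulmxr (rd R n)))).
  have /andP[ker_d d_ker] := rexact R n.
  by rewrite (homspace_exact hP (rd_hom R n.+1) (rd_hom R n)) //; apply/sub_kermxP.
have I_end : I (rlen R) = 0%N.
  apply/eqP; rewrite -leqn0 (leq_trans (rank_leq_row _)) //.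
  by rewrite (rbound (ltnSn (rlen R))) muln0.
suff partial_sum k : \sum_(n < k.+1) (-1) ^+ n * ((dimHom P (rmod R n))%:R : rat) =
    (dimHom P X)%:R + (-1) ^+ k * (I k)%:R by rewrite partial_sum I_end mulr0 addr0.
elim: k => [|k IHk]; first by rewrite big_ord_recr big_ord0 /= add0r dim0 natrD expr0 !mul1r.
by rewrite big_ord_recr /= IHk dimS natrD exprS; ring.
Qed.

(* Rank-nullity in each degree; the image ranks telescope. *)
Lemma euler_dimHom X Y (R : projres X) :
  euler Y R = \sum_(n < (rlen R).+1) (-1) ^+ n * ((dimHom (rmod R n) Y)%:R : rat).
Proof.
have dim_split n : dimHom (rmod R n) Y = (ext_im_rank Y R n + ext_ker_rank Y R n)%N.
  by rewrite /dimHom /ext_im_rank /ext_ker_rank mxrank_mul_ker.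
have dd0 n : rd R n.+1 *m rd R n = 0.
  by have /andP[_ d_ker] := rexact R n; apply/sub_kermxP.
have im_ker n : (ext_im_rank Y R n <= ext_ker_rank Y R n.+1)%N.
  apply/mxrankS/submxMr_rV => v hv; rewrite sub_capmx (homspace_mulmx (rd_hom R n) hv).
  by apply/sub_kermxP; rewrite mulmx_lin_comp dd0 mulmx_lin0.
have im_end : ext_im_rank Y R (rlen R) = 0%N.
  apply/eqP; rewrite -leqn0 (leq_trans (rank_leq_col _)) //.
  by rewrite (rbound (ltnSn (rlen R))) mul0n.
suff partial_sum k : \sum_(n < k.+1) (-1) ^+ n * ((dimExt Y R n)%:R : rat) =
    \sum_(n < k.+1) (-1) ^+ n * (dimHom (rmod R n) Y)%:R - (-1) ^+ k * (ext_im_rank Y R k)%:R.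
  by rewrite /euler partial_sum im_end mulr0 subr0.
elim: k => [|k IHk].
  by rewrite !big_ord_recr !big_ord0 /= !add0r /dimExt subn0 dim_split natrD expr0 !mul1r; ring.
rewrite big_ord_recr /= IHk [in RHS]big_ord_recr /= /dimExt natrB ?im_ker //.
by rewrite dim_split natrD exprS; ring.
Qed.

Section Decomposition.
Variables (n : nat) (P S : 'I_n -> fdmod A).
Unset Implicit Arguments.
Hypotheses (P_proj : forall i, projective (P i)) (P_indec : forall i, indecomposable (P i)).
Hypothesis P_all : forall X, projective X -> indecomposable X -> exists i, isomorphic X (P i).
Hypotheses (S_simple : forall i, simple_mod (S i))
  (S_dist : forall i j, isomorphic (S i) (S j) -> i = j).
Hypothesis P_cover : forall i, exists f : 'M[K]_(mdim (P i), mdim (S i)), is_epi f.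
Set Implicit Arguments.

Lemma dimHom_cover i j : dimHom (P i) (S j) = if i == j then dimHom (S j) (S j) else 0%N.
Proof.
have [pi pi_epi] := P_cover i.
case: eqP => [<- | i_neq_j]; first exact: dimHom_cover_simple pi_epi.
apply: (dimHom_cover_simple_noniso (P_proj i) (P_indec i) (S_simple i) pi_epi (S_simple j)).
by move/S_dist.
Qed.

Let d i : rat := (dimHom (S i) (S i))%:R.

Let d_neq0 i : d i != 0.
Proof. by rewrite pnatr_eq0 -lt0n dimHom_gt0 //; case: (S_simple i). Qed.

(* Q is a direct sum of the P l, and dim Hom(Q, S l) / d l counts the copies of P l. *)
Lemma dimHom_proj_decomposition Q Y : projective Q ->
  (dimHom Y Q)%:R = \sum_l ((dimHom Q (S l))%:R / d l) * (dimHom Y (P l))%:R.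
Proof.
have [N] := ubnP (mdim Q); elim: N Q Y => // N IHN Q Y Q_lt hQ.
have [Q0 | Q_gt0] := posnP (mdim Q).
  by rewrite dimHom_eq0_r // big1 // => l _; rewrite dimHom_eq0_l // mul0r mul0r.
case: (classic (indecomposable Q)) => [Q_indec | Q_dec].
  have [i Q_Pi] := P_all _ hQ Q_indec.
  rewrite (dimHom_iso_r _ Q_Pi) (bigD1 i) //= big1 ?addr0 => [|l l_neq_i].
    by rewrite (dimHom_iso_l _ Q_Pi) dimHom_cover eqxx (divff (d_neq0 i)) mul1r.
  by rewrite (dimHom_iso_l _ Q_Pi) dimHom_cover eq_sym (negbTE l_neq_i) !mul0r.
have [U [V [hU [hV [UV0 UV_full U_neq0 V_neq0]]]]] := decomposable_split Q_gt0 Q_dec.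
have [U_proj V_proj] := projective_direct_summands hU hV UV0 UV_full hQ.
have rkUV : (\rank U + \rank V)%N = mdim Q by rewrite -mxrank_disjoint_sum //; apply/eqP.
have : (0 < \rank U)%N /\ (0 < \rank V)%N by rewrite !lt0n !mxrank_eq0.
case=> U_gt0 V_gt0; have U_lt : (mdim (submod hU) < N)%N by rewrite /=; lia.
have V_lt : (mdim (submod hV) < N)%N by rewrite /=; lia.
rewrite (dimHom_direct_sum_r hU hV UV0 UV_full) natrD (IHN _ _ U_lt U_proj) (IHN _ _ V_lt V_proj).
rewrite -big_split; apply: eq_bigr => l _ /=.
by rewrite (dimHom_direct_sum_l hU hV UV0 UV_full) natrD; ring.
Qed.

Lemma sum_dimHom_euler k j (R : projres (S j)) :
  \sum_i (dimHom (P k) (P i))%:R / d i * euler (S i) R = (dimHom (P k) (S j))%:R.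
Proof.
under eq_bigr => i _ do rewrite euler_dimHom mulr_sumr.
rewrite exchange_big /= (dimHom_resolution R (P_proj k)); apply: eq_bigr => m _.
rewrite (dimHom_proj_decomposition (P k) (@rproj _ _ _ R m)) mulr_sumr.
by apply: eq_bigr => i _; ring.
Qed.

End Decomposition.

End Homs.

Theorem mainTheorem2 (K : fieldType) (A : falgType K) (gldim : fin_gldim A)
  (n : nat) (P S : 'I_n -> fdmod A)
  (HPproj : forall i, projective (P i))
  (HPind : forall i, indecomposable (P i))
  (HPdist : forall i j, isomorphic (P i) (P j) -> i = j)
  (HPall : forall X : fdmod A, projective X -> indecomposable X ->
             exists i, isomorphic X (P i))
  (HSsimp : forall i, simple_mod (S i))
  (HSdist : forall i j, isomorphic (S i) (S j) -> i = j)
  (HSall : forall X : fdmod A, simple_mod X -> exists i, isomorphic X (S i))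
  (HPS : forall i, exists f : 'M[K]_(mdim (P i), mdim (S i)), is_epi f)
  (R : forall j, projres (S j)) :
  let Z : 'M[rat]_n := \matrix_(i, j) (dimHom (P i) (P j))%:R in
  let d (i : 'I_n) : rat := (dimHom (S i) (S i))%:R in
  [/\ Z \in unitmx,
      forall i j, invmx Z i j = (d i)^-1 * euler (S i) (R j) * (d j)^-1
    & magnitude Z = \sum_(i < n) \sum_(j < n) (d i)^-1 * (d j)^-1 * euler (S i) (R j)].
Proof.
move=> Z d; have d_neq0 i : d i != 0.
  by rewrite pnatr_eq0 -lt0n dimHom_gt0 //; case: (HSsimp i).
pose Zinv : 'M[rat]_n := \matrix_(i, j) ((d i)^-1 * euler (S i) (R j) * (d j)^-1).
have Z_Zinv : Z *m Zinv = 1%:M.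
  apply/matrixP => k j; rewrite !mxE.
  under eq_bigr => i _ do rewrite !mxE !mulrA.
  rewrite -mulr_suml (sum_dimHom_euler HPproj HPind HPall HSsimp HSdist HPS).
  rewrite (dimHom_cover HPproj HPind HSsimp HSdist HPS).
  by case: eqP => _; rewrite ?mulfV ?d_neq0 ?mul0r.
have Z_unit : Z \in unitmx by case: (mulmx1_unit Z_Zinv).
have invZ : invmx Z = Zinv by rewrite -[Zinv]mul1mx -(mulVmx Z_unit) -mulmxA Z_Zinv mulmx1.
split => // [i j | ]; first by rewrite invZ mxE.
by apply: eq_bigr => i _; apply: eq_bigr => j _; rewrite invZ mxE mulrAC.
Qed.
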